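(* Let $\Phi$ be a positive, trace-preserving, unital (bistochastic) linear map on hermitian $2\times2$ matrices of the form $$\Phi\big(\tfrac12(x_0I+\vec x\cdot\vec\sigma)\big)=\tfrac12\big(x_0I+(\Lambda\vec x)\cdot\vec\sigma\big),\qquad \Lambda=\mathrm{diag}(\lambda_1,\lambda_2,\lambda_3).$$ Let $w=\max(\lambda_1^2,\lambda_2^2,\lambda_3^2)$. Then the concurrence of $\Phi$ at the state $\rho=\tfrac12(I+\vec x\cdot\vec\sigma)$ (with $x_0=1$) is $$C_\Phi(\rho)=\sqrt{(1-w)x_0^2+\sum_{i=1}^3(w-\lambda_i^2)x_i^2}.$$ This convex roof is flat.
   Context: States of a qubit are $\rho=\tfrac12(x_0I+\vec x\cdot\vec\sigma)$ with $x_0=1$ and $|\vec x|\le1$, where $\vec\sigma$ are the Pauli matrices. Pure states are those with $|\vec x|=1$. The concurrence of a positive trace-preserving map $\Phi$ is defined as follows. For a pure state $\pi$, $C_\Phi(\pi)=2\sqrt{\det\Phi(\pi)}$. For a general state, $C_\Phi(\rho)=\min\sum_j p_jC_\Phi(\pi_j)$, where the minimum is over all decompositions $\rho=\sum_j p_j\pi_j$ into pure states with $p_j>0$ and $\sum_j p_j=1$. A convex roof is flat if the Bloch ball is foliated into leaves, each the convex hull of pure states, on each of which the function is constant. *)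

From Stdlib Require Import Reals Lra List.
Import ListNotations.
Open Scope R_scope.

(* Bloch vectors in R^3. A hermitian 2x2 matrix is (1/2)(x0 I + y . sigma). *)
Definition vec : Type := (R * R * R)%type.
Definition bx1 (v : vec) : R := fst (fst v).
Definition bx2 (v : vec) : R := snd (fst v).
Definition bx3 (v : vec) : R := snd v.
Definition vzero : vec := (0, 0, 0).
Definition vadd (u v : vec) : vec := (bx1 u + bx1 v, bx2 u + bx2 v, bx3 u + bx3 v).
Definition vscale (a : R) (v : vec) : vec := (a * bx1 v, a * bx2 v, a * bx3 v).
Definition norm2 (v : vec) : R := bx1 v ^ 2 + bx2 v ^ 2 + bx3 v ^ 2.

(* Determinant of the hermitian matrix (1/2)(x0 I + y . sigma):
   det = (x0^2 - |y|^2)/4. *)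
Definition det_bloch (x0 : R) (y : vec) : R := (x0 ^ 2 - norm2 y) / 4.

(* The Bloch-vector part of Phi: y |-> Lambda y, Lambda = diag(l1,l2,l3).
   Phi((1/2)(x0 I + y.sigma)) = (1/2)(x0 I + (Lambda y).sigma). *)
Definition Lam (l1 l2 l3 : R) (y : vec) : vec := (l1 * bx1 y, l2 * bx2 y, l3 * bx3 y).

(* Positivity of Phi: (1/2)(x0 I + y.sigma) >= 0  iff  |y| <= x0;
   Phi positive iff it maps PSD matrices to PSD matrices. *)
Definition positive_map (l1 l2 l3 : R) : Prop :=
  forall (x0 : R) (y : vec), 0 <= x0 -> norm2 y <= x0 ^ 2 ->
    norm2 (Lam l1 l2 l3 y) <= x0 ^ 2.

Definition is_state (x : vec) : Prop := norm2 x <= 1.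
Definition is_pure (x : vec) : Prop := norm2 x = 1.

Definition C_pure (l1 l2 l3 : R) (y : vec) : R :=
  2 * sqrt (det_bloch 1 (Lam l1 l2 l3 y)).

Definition wsum (d : list (R * vec)) : vec :=
  fold_right (fun pv acc => vadd (vscale (fst pv) (snd pv)) acc) vzero d.
Definition psum (d : list (R * vec)) : R :=
  fold_right (fun pv acc => fst pv + acc) 0 d.

Definition is_convex_decomp (S : vec -> Prop) (d : list (R * vec)) (x : vec) : Prop :=
  (forall pv, In pv d -> 0 < fst pv /\ S (snd pv)) /\
  psum d = 1 /\ wsum d = x.

Definition is_pure_decomp (d : list (R * vec)) (x : vec) : Prop :=
  is_convex_decomp is_pure d x.

Definition roof_cost (l1 l2 l3 : R) (d : list (R * vec)) : R :=
  fold_right (fun pv acc => fst pv * C_pure l1 l2 l3 (snd pv) + acc) 0 d.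

Definition concurrence_is (l1 l2 l3 : R) (x : vec) (c : R) : Prop :=
  (exists d, is_pure_decomp d x /\ roof_cost l1 l2 l3 d = c) /\
  (forall d, is_pure_decomp d x -> c <= roof_cost l1 l2 l3 d).

Definition conv (S : vec -> Prop) (z : vec) : Prop :=
  exists d, is_convex_decomp S d z.

Definition foliation_by_pure_hulls (F : (vec -> Prop) -> Prop) : Prop :=
  (forall L, F L -> exists S : vec -> Prop,
       (forall y, S y -> is_pure y) /\ (forall z, L z <-> conv S z)) /\
  (forall L, F L -> exists z, L z) /\
  (forall x, is_state x -> exists L, F L /\ L x) /\
  (forall L L' x, F L -> F L' -> L x -> L' x -> forall z, L z <-> L' z).

Definition flat_roof (l1 l2 l3 : R) : Prop :=
  exists F, foliation_by_pure_hulls F /\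
    forall L, F L -> exists c, forall x, L x -> concurrence_is l1 l2 l3 x c.

From Stdlib Require Import Reals Lra List.
Import ListNotations.
Open Scope R_scope.

(* Write w = max l_i^2 and g(x) = sqrt((1-w) + sum_i (w - l_i^2) x_i^2).
   1. On a pure state y (|y| = 1) one has 4 det Phi(y) = 1 - sum l_i^2 y_i^2
      = g(y)^2, so C_Phi(y) = g(y).
   2. Positivity of Phi gives w <= 1, so all weights of the quadratic form
      under the root are nonnegative: g is the restriction to x0 = 1 of a
      weighted Euclidean seminorm of (x0, x).  A seminorm is convex and
      positively homogeneous, hence (Jensen) g(x) <= sum_j p_j g(y_j) for every
      pure decomposition of x: g(x) is a lower bound for the convex roof.
   3. If w = l_k^2, the k-th weight vanishes and g is constant along lines
      parallel to the k-th axis e.  The chord through a state x parallel to e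
      meets the Bloch sphere in two pure states whose convex combination is x;
      its cost is g(x), so the bound is attained: C_Phi = g.
   4. The chords parallel to e foliate the Bloch ball; each one is the convex
      hull of its two pure endpoints and g is constant on it: the roof is flat. *)

Lemma vec_eq (u v : vec) : bx1 u = bx1 v -> bx2 u = bx2 v -> bx3 u = bx3 v -> u = v.
Proof.
  destruct u as [[u1 u2] u3], v as [[v1 v2] v3]; unfold bx1, bx2, bx3; cbn.
  intros -> -> ->; reflexivity.
Qed.

Ltac vec_ring :=
  apply vec_eq;
  unfold vadd, vscale, vzero, bx1, bx2, bx3; cbn [fst snd]; ring.

Lemma is_convex_decomp_weaken (S T : vec -> Prop) d x :
  is_convex_decomp S d x -> (forall y, S y -> T y) -> is_convex_decomp T d x.
Proof.
  intros [Hd Hrest] HST; split; [|exact Hrest].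
  intros pv Hpv; destruct (Hd pv Hpv) as [Hp HS]; split; [exact Hp | exact (HST _ HS)].
Qed.

Definition gcost (g : vec -> R) (d : list (R * vec)) : R :=
  fold_right (fun pv acc => fst pv * g (snd pv) + acc) 0 d.

Lemma psum_cons p y d : psum ((p, y) :: d) = p + psum d.
Proof. reflexivity. Qed.

Lemma wsum_cons p y d : wsum ((p, y) :: d) = vadd (vscale p y) (wsum d).
Proof. reflexivity. Qed.

Lemma gcost_cons g p y d : gcost g ((p, y) :: d) = p * g y + gcost g d.
Proof. reflexivity. Qed.

Lemma roof_cost_gcost l1 l2 l3 d : roof_cost l1 l2 l3 d = gcost (C_pure l1 l2 l3) d.
Proof. reflexivity. Qed.

Lemma gcost_ext g h d :
  (forall pv, In pv d -> g (snd pv) = h (snd pv)) -> gcost g d = gcost h d.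
Proof.
  induction d as [|[p y] d IH]; intros Hgh; [reflexivity|].
  pose proof (Hgh (p, y) (or_introl eq_refl)) as Hy; cbn [snd] in Hy.
  rewrite !gcost_cons, Hy, IH by (intros pv Hpv; apply Hgh; right; exact Hpv).
  reflexivity.
Qed.

Lemma gcost_const c d : gcost (fun _ => c) d = c * psum d.
Proof.
  induction d as [|[p y] d IH]; [cbn; ring|].
  rewrite gcost_cons, psum_cons, IH; ring.
Qed.

Lemma sqrt_sum_le A B S :
  0 <= A -> 0 <= B -> S ^ 2 <= A * B -> sqrt (A + B + 2 * S) <= sqrt A + sqrt B.
Proof.
  intros HA HB HS.
  assert (HSle : S <= sqrt A * sqrt B).
  { rewrite <- sqrt_mult by assumption.
    apply Rle_trans with (Rabs S); [apply Rle_abs|].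
    rewrite <- sqrt_Rsqr_abs; apply sqrt_le_1_alt; unfold Rsqr; lra. }
  pose proof (sqrt_pos A); pose proof (sqrt_pos B).
  rewrite <- (sqrt_pow2 (sqrt A + sqrt B)) by lra.
  apply sqrt_le_1_alt.
  replace ((sqrt A + sqrt B) ^ 2) with
    (sqrt A * sqrt A + sqrt B * sqrt B + 2 * (sqrt A * sqrt B)) by ring.
  rewrite !sqrt_sqrt by assumption; lra.
Qed.

Section WeightedSeminorm.

Variables c0 a1 a2 a3 : R.

Definition wform (x0 : R) (y : vec) : R :=
  c0 * x0 ^ 2 + (a1 * bx1 y ^ 2 + a2 * bx2 y ^ 2 + a3 * bx3 y ^ 2).

Definition wdot (u0 : R) (u : vec) (v0 : R) (v : vec) : R :=
  c0 * u0 * v0 + a1 * bx1 u * bx1 v + a2 * bx2 u * bx2 v + a3 * bx3 u * bx3 v.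

Definition wnorm (x0 : R) (y : vec) : R := sqrt (wform x0 y).

(* The form is unchanged by translation along a direction killed by the
   weights; no sign condition is needed. *)
Lemma wnorm_shift x0 y e t :
  a1 * bx1 e = 0 -> a2 * bx2 e = 0 -> a3 * bx3 e = 0 ->
  wnorm x0 (vadd y (vscale t e)) = wnorm x0 y.
Proof.
  intros H1 H2 H3; unfold wnorm, wform; f_equal.
  destruct y as [[y1 y2] y3], e as [[e1 e2] e3].
  unfold vadd, vscale, bx1, bx2, bx3 in *; cbn [fst snd] in *.
  transitivity (c0 * x0 ^ 2 + (a1 * y1 ^ 2 + a2 * y2 ^ 2 + a3 * y3 ^ 2)
    + (2 * y1 * t + t ^ 2 * e1) * (a1 * e1) + (2 * y2 * t + t ^ 2 * e2) * (a2 * e2)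
    + (2 * y3 * t + t ^ 2 * e3) * (a3 * e3)); [ring|].
  rewrite H1, H2, H3; ring.
Qed.

Hypotheses (Hc0 : 0 <= c0) (Ha1 : 0 <= a1) (Ha2 : 0 <= a2) (Ha3 : 0 <= a3).

Lemma wform_nonneg x0 y : 0 <= wform x0 y.
Proof.
  unfold wform.
  pose proof (pow2_ge_0 x0); pose proof (pow2_ge_0 (bx1 y));
  pose proof (pow2_ge_0 (bx2 y)); pose proof (pow2_ge_0 (bx3 y)).
  repeat apply Rplus_le_le_0_compat; apply Rmult_le_pos; assumption.
Qed.

(* Cauchy-Schwarz, via Lagrange's identity for four weighted coordinates. *)
Lemma wdot_cauchy_schwarz u0 u v0 v :
  wdot u0 u v0 v ^ 2 <= wform u0 u * wform v0 v.
Proof.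
  destruct u as [[u1 u2] u3], v as [[v1 v2] v3].
  unfold wdot, wform, bx1, bx2, bx3; cbn [fst snd].
  match goal with |- ?S ^ 2 <= ?A * ?B =>
    apply Rge_le, Rminus_ge, Rle_ge;
    replace (A * B - S ^ 2) with
      (c0 * a1 * (u0 * v1 - u1 * v0) ^ 2 + c0 * a2 * (u0 * v2 - u2 * v0) ^ 2
       + c0 * a3 * (u0 * v3 - u3 * v0) ^ 2 + a1 * a2 * (u1 * v2 - u2 * v1) ^ 2
       + a1 * a3 * (u1 * v3 - u3 * v1) ^ 2 + a2 * a3 * (u2 * v3 - u3 * v2) ^ 2) by ring
  end.
  repeat apply Rplus_le_le_0_compat;
    (apply Rmult_le_pos; [apply Rmult_le_pos; assumption | apply pow2_ge_0]).
Qed.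

Lemma wnorm_triangle u0 u v0 v :
  wnorm (u0 + v0) (vadd u v) <= wnorm u0 u + wnorm v0 v.
Proof.
  unfold wnorm.
  replace (wform (u0 + v0) (vadd u v))
    with (wform u0 u + wform v0 v + 2 * wdot u0 u v0 v)
    by (destruct u as [[? ?] ?], v as [[? ?] ?];
        unfold wform, wdot, vadd, bx1, bx2, bx3; cbn [fst snd]; ring).
  apply sqrt_sum_le; auto using wform_nonneg, wdot_cauchy_schwarz.
Qed.

Lemma wnorm_scale p x0 y : 0 <= p -> wnorm (p * x0) (vscale p y) = p * wnorm x0 y.
Proof.
  intros Hp; unfold wnorm.
  replace (wform (p * x0) (vscale p y)) with (p ^ 2 * wform x0 y)
    by (destruct y as [[? ?] ?]; unfold wform, vscale, bx1, bx2, bx3; cbn [fst snd]; ring).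
  rewrite sqrt_mult by (apply pow2_ge_0 || apply wform_nonneg).
  rewrite sqrt_pow2 by exact Hp; reflexivity.
Qed.

Lemma wnorm_jensen d :
  (forall pv, In pv d -> 0 <= fst pv) -> wnorm (psum d) (wsum d) <= gcost (wnorm 1) d.
Proof.
  induction d as [|[p y] d IH]; intros Hd.
  - unfold wnorm, wform, psum, wsum, gcost, vzero, bx1, bx2, bx3; cbn [fold_right fst snd].
    replace (c0 * 0 ^ 2 + (a1 * 0 ^ 2 + a2 * 0 ^ 2 + a3 * 0 ^ 2)) with 0 by ring.
    rewrite sqrt_0; lra.
  - assert (Hp : 0 <= p) by exact (Hd (p, y) (or_introl eq_refl)).
    rewrite psum_cons, wsum_cons, gcost_cons.
    rewrite <- (wnorm_scale p 1 y Hp), Rmult_1_r.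
    eapply Rle_trans; [apply wnorm_triangle|].
    apply Rplus_le_compat_l, IH; intros pv Hpv; apply Hd; right; exact Hpv.
Qed.

End WeightedSeminorm.

Lemma wnorm_euclidean x0 y : wnorm 0 1 1 1 x0 y = sqrt (norm2 y).
Proof. unfold wnorm, wform, norm2; f_equal; ring. Qed.

(* A convex combination of pure states lies in the Bloch ball: Jensen for the
   Euclidean norm. *)
Lemma conv_pure_is_state S d z :
  (forall y, S y -> is_pure y) -> is_convex_decomp S d z -> is_state z.
Proof.
  intros HS [Hd [Hp Hw]].
  pose proof (wnorm_jensen 0 1 1 1 (Rle_refl 0) Rle_0_1 Rle_0_1 Rle_0_1 d
                (fun pv H => Rlt_le _ _ (proj1 (Hd pv H)))) as Hjensen.
  assert (Hpure : forall pv, In pv d -> wnorm 0 1 1 1 1 (snd pv) = 1).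
  { intros pv Hpv; rewrite wnorm_euclidean, (HS _ (proj2 (Hd pv Hpv))); apply sqrt_1. }
  rewrite (gcost_ext _ (fun _ => 1) d Hpure), gcost_const, Hp, Rmult_1_l, Hw, wnorm_euclidean,
    <- sqrt_1 in Hjensen.
  apply sqrt_le_0 in Hjensen; [exact Hjensen| |lra].
  unfold norm2; pose proof (pow2_ge_0 (bx1 z)); pose proof (pow2_ge_0 (bx2 z));
    pose proof (pow2_ge_0 (bx3 z)); lra.
Qed.

Section Chords.

Variable e : vec.
Hypothesis He : norm2 e = 1.

Definition on_line (a z : vec) : Prop := exists t, z = vadd a (vscale t e).

Lemma on_line_refl a : on_line a a.
Proof. exists 0; vec_ring. Qed.

Lemma on_line_trans a b z : on_line a b -> on_line b z -> on_line a z.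
Proof. intros [s ->] [t ->]; exists (s + t); vec_ring. Qed.

Lemma on_line_sym a b : on_line a b -> on_line b a.
Proof. intros [s ->]; exists (- s); vec_ring. Qed.

Lemma on_line_wsum a d :
  (forall pv, In pv d -> on_line a (snd pv)) -> psum d = 1 -> on_line a (wsum d).
Proof.
  intros Hd Hp.
  enough (exists T, wsum d = vadd (vscale (psum d) a) (vscale T e)) as [T HT].
  { exists T; rewrite HT, Hp; vec_ring. }
  clear Hp; induction d as [|[p y] d IH].
  - exists 0; cbn; vec_ring.
  - destruct IH as [T HT]; [intros pv Hpv; apply Hd; right; exact Hpv|].
    destruct (Hd (p, y) (or_introl eq_refl)) as [t Ht]; cbn [snd] in Ht.
    exists (p * t + T); rewrite wsum_cons, psum_cons, HT, Ht; vec_ring.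
Qed.

Lemma norm2_along x t :
  norm2 (vadd x (vscale t e)) = norm2 x + 2 * t * (bx1 x * bx1 e + bx2 x * bx2 e + bx3 x * bx3 e)
                                + t ^ 2 * norm2 e.
Proof.
  unfold norm2, vadd, vscale, bx1, bx2, bx3; cbn [fst snd]; ring.
Qed.

(* Through an interior point x the line parallel to e meets the sphere at
   x + t1 e and x + t2 e, and x = p1 (x + t1 e) + p2 (x + t2 e) with p1, p2 > 0:
   t1,2 = -b +- r with b = <x, e>, r = sqrt(b^2 + 1 - |x|^2). *)
Lemma chord_through x :
  norm2 x < 1 ->
  exists t1 t2 p1 p2, 0 < p1 /\ 0 < p2 /\ p1 + p2 = 1 /\ p1 * t1 + p2 * t2 = 0 /\
    is_pure (vadd x (vscale t1 e)) /\ is_pure (vadd x (vscale t2 e)).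
Proof.
  intros Hx.
  set (b := bx1 x * bx1 e + bx2 x * bx2 e + bx3 x * bx3 e).
  set (D := b ^ 2 + (1 - norm2 x)).
  set (r := sqrt D).
  assert (HD : 0 <= D) by (unfold D; pose proof (pow2_ge_0 b); lra).
  assert (Hr2 : r * r = D) by (apply sqrt_sqrt; exact HD).
  assert (Hbr : Rabs b < r).
  { unfold r; rewrite <- sqrt_Rsqr_abs; apply sqrt_lt_1_alt.
    unfold Rsqr, D; split; [apply Rle_0_sqr | lra]. }
  apply Rabs_def2 in Hbr; destruct Hbr as [Hb1 Hb2].
  assert (Hpure : forall t, (t + b) ^ 2 = D -> is_pure (vadd x (vscale t e))).
  { intros t Ht; unfold is_pure; rewrite norm2_along, He; fold b.
    assert (Hsq : (t + b) ^ 2 = t ^ 2 + 2 * t * b + b ^ 2) by ring.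
    unfold D in Ht; lra. }
  exists (- b + r), (- b - r), ((b + r) / (2 * r)), ((r - b) / (2 * r)).
  repeat split.
  - apply Rdiv_lt_0_compat; lra.
  - apply Rdiv_lt_0_compat; lra.
  - field; lra.
  - field; lra.
  - apply Hpure; rewrite <- Hr2; ring.
  - apply Hpure; rewrite <- Hr2; ring.
Qed.

Lemma chord_decomp x :
  is_state x -> exists d, is_convex_decomp (fun y => is_pure y /\ on_line x y) d x.
Proof.
  intros Hx; destruct (Req_dec (norm2 x) 1) as [Hpx|Hmixed].
  - exists [(1, x)]; split; [|split].
    + intros pv [<-|[]]; split; [cbn; lra | split; [exact Hpx | apply on_line_refl]].
    + cbn; ring.
    + cbn; vec_ring.
  - destruct (chord_through x) as (t1 & t2 & p1 & p2 & Hp1 & Hp2 & Hsum & Hbary & Hy1 & Hy2).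
    { unfold is_state in Hx; lra. }
    exists [(p1, vadd x (vscale t1 e)); (p2, vadd x (vscale t2 e))]; split; [|split].
    + intros pv [<-|[<-|[]]]; cbn [fst snd];
        (split; [assumption | split; [assumption | eexists; reflexivity]]).
    + cbn; lra.
    + transitivity (vadd (vscale (p1 + p2) x) (vscale (p1 * t1 + p2 * t2) e)); [cbn; vec_ring|].
      rewrite Hsum, Hbary; vec_ring.
Qed.

Lemma gcost_on_line (g : vec -> R) x d :
  (forall z t, g (vadd z (vscale t e)) = g z) ->
  (forall pv, In pv d -> on_line x (snd pv)) -> psum d = 1 -> gcost g d = g x.
Proof.
  intros Hg Hd Hp.
  rewrite (gcost_ext g (fun _ => g x)), gcost_const, Hp; [ring|].
  intros pv Hpv; destruct (on_line_sym _ _ (Hd pv Hpv)) as [t ->]; symmetry; apply Hg.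
Qed.

Definition chord_leaf (a z : vec) : Prop := is_state z /\ on_line a z.

Definition chord_foliation (L : vec -> Prop) : Prop :=
  exists a, is_state a /\ forall z, L z <-> chord_leaf a z.

Lemma chord_leaf_hull a z :
  chord_leaf a z <-> conv (fun y => is_pure y /\ on_line a y) z.
Proof.
  split.
  - intros [Hz Haz]; destruct (chord_decomp z Hz) as [d Hd]; exists d.
    apply (is_convex_decomp_weaken _ _ d z Hd).
    intros y [Hy Hzy]; split; [exact Hy | exact (on_line_trans a z y Haz Hzy)].
  - intros [d Hd]; split.
    + apply (conv_pure_is_state (fun y => is_pure y /\ on_line a y) d z);
        [intros y [Hy _]; exact Hy | exact Hd].
    + destruct Hd as [Hd [Hp <-]]; apply on_line_wsum; [|exact Hp].
      intros pv Hpv; exact (proj2 (proj2 (Hd pv Hpv))).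
Qed.

Lemma chord_foliation_is_foliation : foliation_by_pure_hulls chord_foliation.
Proof.
  split; [|split; [|split]].
  - intros L [a [_ HL]]; exists (fun y => is_pure y /\ on_line a y); split.
    + intros y [Hy _]; exact Hy.
    + intros z; rewrite HL; apply chord_leaf_hull.
  - intros L [a [Ha HL]]; exists a; apply HL; split; [exact Ha | apply on_line_refl].
  - intros x Hx; exists (chord_leaf x); split.
    + exists x; split; [exact Hx | tauto].
    + split; [exact Hx | apply on_line_refl].
  -
    intros L L' x [a [_ HL]] [a' [_ HL']] Hx Hx' z.
    apply HL in Hx as [_ Hax]; apply HL' in Hx' as [_ Ha'x].
    assert (Haa' : on_line a a') by exact (on_line_trans _ _ _ Hax (on_line_sym _ _ Ha'x)).
    rewrite HL, HL'; unfold chord_leaf; split; intros [Hz Hline]; split; auto.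
    + exact (on_line_trans _ _ _ (on_line_sym _ _ Haa') Hline).
    + exact (on_line_trans _ _ _ Haa' Hline).
Qed.

End Chords.

Definition wmax (l1 l2 l3 : R) : R := Rmax (Rmax (l1 ^ 2) (l2 ^ 2)) (l3 ^ 2).

Definition conc_formula (l1 l2 l3 : R) (x : vec) : R :=
  let w := wmax l1 l2 l3 in wnorm (1 - w) (w - l1 ^ 2) (w - l2 ^ 2) (w - l3 ^ 2) 1 x.

Lemma wmax_ge l1 l2 l3 :
  l1 ^ 2 <= wmax l1 l2 l3 /\ l2 ^ 2 <= wmax l1 l2 l3 /\ l3 ^ 2 <= wmax l1 l2 l3.
Proof.
  unfold wmax.
  pose proof (Rmax_l (Rmax (l1 ^ 2) (l2 ^ 2)) (l3 ^ 2)).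
  pose proof (Rmax_r (Rmax (l1 ^ 2) (l2 ^ 2)) (l3 ^ 2)).
  pose proof (Rmax_l (l1 ^ 2) (l2 ^ 2)); pose proof (Rmax_r (l1 ^ 2) (l2 ^ 2)).
  lra.
Qed.

Lemma wmax_attained l1 l2 l3 :
  wmax l1 l2 l3 = l1 ^ 2 \/ wmax l1 l2 l3 = l2 ^ 2 \/ wmax l1 l2 l3 = l3 ^ 2.
Proof. unfold wmax; apply Rmax_case; [apply Rmax_case|]; auto. Qed.

(* Positivity forces every |l_i| <= 1: apply Phi to the pure states on the axes. *)
Lemma positive_map_wmax_le_1 l1 l2 l3 : positive_map l1 l2 l3 -> wmax l1 l2 l3 <= 1.
Proof.
  intros Hpos.
  assert (Haxis : forall y, norm2 y = 1 -> norm2 (Lam l1 l2 l3 y) <= 1).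
  { intros y Hy; pose proof (Hpos 1 y Rle_0_1) as H; rewrite pow1 in H; apply H; lra. }
  assert (E1 : norm2 (Lam l1 l2 l3 (1, 0, 0)) = l1 ^ 2)
    by (unfold norm2, Lam, bx1, bx2, bx3; cbn [fst snd]; ring).
  assert (E2 : norm2 (Lam l1 l2 l3 (0, 1, 0)) = l2 ^ 2)
    by (unfold norm2, Lam, bx1, bx2, bx3; cbn [fst snd]; ring).
  assert (E3 : norm2 (Lam l1 l2 l3 (0, 0, 1)) = l3 ^ 2)
    by (unfold norm2, Lam, bx1, bx2, bx3; cbn [fst snd]; ring).
  unfold wmax; repeat apply Rmax_lub; [rewrite <- E1 | rewrite <- E2 | rewrite <- E3];
    apply Haxis; unfold norm2, bx1, bx2, bx3; cbn [fst snd]; ring.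
Qed.

Lemma two_sqrt_quarter A : 2 * sqrt (A / 4) = sqrt A.
Proof.
  rewrite sqrt_div_alt by lra.
  replace 4 with (2 * 2) by ring; rewrite sqrt_square by lra; field.
Qed.

Lemma C_pure_formula l1 l2 l3 y : is_pure y -> C_pure l1 l2 l3 y = conc_formula l1 l2 l3 y.
Proof.
  intros Hy; unfold is_pure in Hy.
  unfold C_pure, det_bloch, conc_formula, wnorm, wform; rewrite two_sqrt_quarter; f_equal.
  set (w := wmax l1 l2 l3).
  transitivity (1 - w + w * norm2 y - (l1 ^ 2 * bx1 y ^ 2 + l2 ^ 2 * bx2 y ^ 2 + l3 ^ 2 * bx3 y ^ 2)).
  - rewrite Hy; unfold norm2, Lam, bx1, bx2, bx3; cbn [fst snd]; ring.
  - unfold norm2; ring.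
Qed.

(* Step 3: g is constant along the axis on which |l_i| is maximal. *)
Lemma flat_direction l1 l2 l3 :
  exists e, norm2 e = 1 /\
    forall z t, conc_formula l1 l2 l3 (vadd z (vscale t e)) = conc_formula l1 l2 l3 z.
Proof.
  destruct (wmax_attained l1 l2 l3) as [Hw|[Hw|Hw]];
    [exists (1, 0, 0) | exists (0, 1, 0) | exists (0, 0, 1)];
    (split; [unfold norm2, bx1, bx2, bx3; cbn; ring|]);
    intros z t; unfold conc_formula; cbv zeta;
    apply wnorm_shift; unfold bx1, bx2, bx3; cbn [fst snd]; rewrite Hw; ring.
Qed.

Lemma roof_cost_formula l1 l2 l3 S d x :
  (forall y, S y -> is_pure y) -> is_convex_decomp S d x ->
  roof_cost l1 l2 l3 d = gcost (conc_formula l1 l2 l3) d.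
Proof.
  intros HS [Hd _]; rewrite roof_cost_gcost; apply gcost_ext.
  intros pv Hpv; apply C_pure_formula, HS, (proj2 (Hd pv Hpv)).
Qed.

Section PositiveDiagonalMap.

Variables l1 l2 l3 : R.
Hypothesis Hpos : positive_map l1 l2 l3.

Lemma conc_formula_lower_bound x d :
  is_pure_decomp d x -> conc_formula l1 l2 l3 x <= roof_cost l1 l2 l3 d.
Proof.
  intros Hdec; rewrite (roof_cost_formula l1 l2 l3 is_pure d x) by auto.
  destruct Hdec as [Hd [Hp Hw]].
  pose proof (positive_map_wmax_le_1 l1 l2 l3 Hpos); pose proof (wmax_ge l1 l2 l3).
  replace (conc_formula l1 l2 l3 x)
    with (let w := wmax l1 l2 l3 in
          wnorm (1 - w) (w - l1 ^ 2) (w - l2 ^ 2) (w - l3 ^ 2) (psum d) (wsum d))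
    by (rewrite Hp, Hw; reflexivity).
  apply wnorm_jensen; try lra.
  intros pv Hpv; exact (Rlt_le _ _ (proj1 (Hd pv Hpv))).
Qed.

Lemma concurrence_formula x :
  is_state x -> concurrence_is l1 l2 l3 x (conc_formula l1 l2 l3 x).
Proof.
  intros Hx; split; [|exact (conc_formula_lower_bound x)].
  destruct (flat_direction l1 l2 l3) as [e [He Hg]].
  destruct (chord_decomp e He x Hx) as [d Hd].
  exists d; split.
  - apply (is_convex_decomp_weaken _ _ d x Hd); intros y [Hy _]; exact Hy.
  - rewrite (roof_cost_formula l1 l2 l3 _ d x (fun y H => proj1 H) Hd).
    destruct Hd as [Hd [Hp _]]; apply (gcost_on_line e); [exact Hg| |exact Hp].
    intros pv Hpv; exact (proj2 (proj2 (Hd pv Hpv))).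
Qed.

Lemma flat_roof_of_positive : flat_roof l1 l2 l3.
Proof.
  destruct (flat_direction l1 l2 l3) as [e [He Hg]].
  exists (chord_foliation e); split; [exact (chord_foliation_is_foliation e He)|].
  intros L [a [_ HL]]; exists (conc_formula l1 l2 l3 a); intros x Hx.
  apply HL in Hx as [Hx [t ->]]; rewrite <- (Hg a t).
  exact (concurrence_formula _ Hx).
Qed.

End PositiveDiagonalMap.

Theorem mainTheorem4 (l1 l2 l3 : R) :
  positive_map l1 l2 l3 ->
  (forall x : vec, is_state x ->
     concurrence_is l1 l2 l3 x
       (let w := Rmax (Rmax (l1 ^ 2) (l2 ^ 2)) (l3 ^ 2) in
        sqrt ((1 - w) * 1 ^ 2
              + ((w - l1 ^ 2) * bx1 x ^ 2 + (w - l2 ^ 2) * bx2 x ^ 2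
                 + (w - l3 ^ 2) * bx3 x ^ 2)))) /\
  flat_roof l1 l2 l3.
Proof.
  intros Hpos; split.
  - intros x Hx; exact (concurrence_formula l1 l2 l3 Hpos x Hx).
  - exact (flat_roof_of_positive l1 l2 l3 Hpos).
Qed.
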